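(* Let $\Bbbk$ be a field, $A$ a $\Bbbk$-algebra, $\Gamma$ a subalgebra, $\sim$ an equivalence relation on $\mathrm{cfs}(\Gamma)$, and suppose $\Gamma$ is a Harish-Chandra block subalgebra of $A$ with respect to $\sim$. Let $V$ be an $A$-module and $\mathcal D\subseteq\mathrm{cfs}(\Gamma)/{\sim}$. Then $$A.\Big(\bigoplus_{B\in\mathcal D}V(B)\Big)\subseteq\bigoplus_{C\succ\mathcal D}V(C),$$ where $C\succ\mathcal D$ means $B\prec C$ for some $B\in\mathcal D$.
   Context: $\mathrm{cfs}(\Gamma)$: maximal two-sided ideals $\mathfrak m$ of $\Gamma$ with $\dim\Gamma/\mathfrak m<\infty$. For a class $B$, $\mathcal W(B)=\{\mathfrak m_1\cdots\mathfrak m_k:k\ge0,\mathfrak m_i\in B\}$. For a $\Gamma$-module $V$, $V(B)=\{v\in V:\mathfrak m v=0$ for some $\mathfrak m\in\mathcal W(B)\}$ (the sum of these is direct); $V$ is a block module if $V=\bigoplus_B V(B)$, and $\mathrm{Supp}(V)=\{B:V(B)\ne0\}$. $\Gamma$ is a Harish-Chandra block subalgebra of $A$ if $A/A\mathfrak m$ is a block module over $\Gamma$ for every $B$ and $\mathfrak m\in\mathcal W(B)$. $\prec$ is the preorder on $\mathrm{cfs}(\Gamma)/{\sim}$ generated by $B\prec C$ whenever $C\in\mathrm{Supp}(A/A\mathfrak m)$ for some $\mathfrak m\in B$. *)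

From HB Require Import structures.
From mathcomp Require Import all_boot all_order all_algebra.
From Stdlib Require List Relations.
Set Implicit Arguments. Unset Strict Implicit. Unset Printing Implicit Defensive.
Import GRing.Theory.
Local Open Scope ring_scope.

Section Defs.
Variables (k : fieldType) (A : algType k).

Definition subset_A := A -> Prop.
Definition cls := subset_A -> Prop.

Definition subalgebra (G : subset_A) : Prop :=
  [/\ G 1, G 0, (forall x y, G x -> G y -> G (x + y)),
      (forall x y, G x -> G y -> G (x * y)) & (forall (c : k) x, G x -> G (c *: x))].

Definition ideal_of (G m : subset_A) : Prop :=
  [/\ (forall x, m x -> G x), m 0, (forall x y, m x -> m y -> m (x + y)),
      (forall g x, G g -> m x -> m (g * x)) & (forall g x, G g -> m x -> m (x * g))].

Definition maximal_ideal (G m : subset_A) : Prop :=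
  [/\ ideal_of G m, (exists g, G g /\ ~ m g) &
      (forall J, ideal_of G J -> (forall x, m x -> J x) ->
         (forall x, J x <-> m x) \/ (forall x, J x <-> G x))].

(* dim Gamma/m < oo : finitely many elements of Gamma span Gamma modulo m *)
Definition finite_codim (G m : subset_A) : Prop :=
  exists s : seq A, List.Forall G s /\
    forall g, G g -> exists cs : seq k, size cs = size s /\
      m (g - \sum_(i < size s) cs`_i *: s`_i).

Definition cfs (G : subset_A) (m : subset_A) : Prop :=
  maximal_ideal G m /\ finite_codim G m.

Definition equiv_on (P : subset_A -> Prop) (sim : subset_A -> subset_A -> Prop) : Prop :=
  [/\ (forall m, P m -> sim m m),
      (forall m n, P m -> P n -> sim m n -> sim n m) &
      (forall m n p, P m -> P n -> P p -> sim m n -> sim n p -> sim m p)].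

Definition is_class (G : subset_A) (sim : subset_A -> subset_A -> Prop) (B : cls) : Prop :=
  exists m, cfs G m /\ forall n, B n <-> (cfs G n /\ sim m n).

(* product of ideals m_1 ... m_k of Gamma (the empty product is Gamma) *)
Fixpoint ideal_prod (G : subset_A) (ms : seq subset_A) : subset_A :=
  match ms with
  | [::] => G
  | m :: ms' => fun x => exists s : seq (A * A),
      List.Forall (fun p => m p.1 /\ ideal_prod G ms' p.2) s /\
      x = \sum_(p <- s) p.1 * p.2
  end.

Definition left_span (m : subset_A) : subset_A :=
  fun x => exists s : seq (A * A), List.Forall (fun p => m p.2) s /\
      x = \sum_(p <- s) p.1 * p.2.

Section QuotModule.
(* A Gamma-module presented as a quotient M/N, with Gamma acting through act;
   elements of M/N are represented by elements of M, N is the zero class. *)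
Variables (G : subset_A) (sim : subset_A -> subset_A -> Prop).
Variables (M : zmodType) (act : A -> M -> M) (N : M -> Prop).

(* v in (M/N)(B): annihilated by some ideal in W(B) *)
Definition part (B : cls) (v : M) : Prop :=
  exists ms : seq subset_A, List.Forall B ms /\
    forall x, ideal_prod G ms x -> N (act x v).

Definition in_sum_parts (P : cls -> Prop) (v : M) : Prop :=
  exists s : seq (cls * M), List.Forall (fun p => P p.1 /\ part p.1 p.2) s /\
    N (v - \sum_(p <- s) p.2).

Definition block_module : Prop :=
  forall v, in_sum_parts (is_class G sim) v.

Definition supp (C : cls) : Prop :=
  is_class G sim C /\ exists v, part C v /\ ~ N v.
End QuotModule.

Definition AmodAm_block (G : subset_A) sim (m : subset_A) : Prop :=
  block_module G sim (fun x (a : A) => x * a) (left_span m).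

Definition HC_block_subalgebra (G : subset_A) sim : Prop :=
  forall B, is_class G sim B ->
    forall ms : seq subset_A, List.Forall B ms -> AmodAm_block G sim (ideal_prod G ms).

Definition prec_step (G : subset_A) sim (B C : cls) : Prop :=
  is_class G sim B /\
  exists m, B m /\ supp G sim (fun x (a : A) => x * a) (left_span m) C.

Definition prec (G : subset_A) sim : cls -> cls -> Prop :=
  Relation_Operators.clos_refl_trans cls (prec_step G sim).

Definition is_Amodule (V : lmodType k) (act : A -> V -> V) : Prop :=
  [/\ (forall a u v, act a (u + v) = act a u + act a v),
      (forall a (c : k) v, act a (c *: v) = c *: act a v),
      (forall a b v, act (a + b) v = act a v + act b v) &
      (forall (c : k) a v, act (c *: a) v = c *: act a v)] /\
  (forall v, act 1 v = v) /\
      (forall a b v, act (a * b) v = act a (act b v)).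

End Defs.

From HB Require Import structures.
From mathcomp Require Import all_boot all_order all_algebra.
From Stdlib Require List Relations.
From Stdlib Require Import Classical FunctionalExtensionality PropExtensionality.

Set Implicit Arguments. Unset Strict Implicit. Unset Printing Implicit Defensive.
Import GRing.Theory.
Local Open Scope ring_scope.

(* For [w] in [V(B)] killed by [K] in [W(B)], [a] acts on [w] through [A/AK],
   a block module: [a = sum_C c_C] with [c_C] in [(A/AK)(C)], and [c_C w] lies
   in [V(C)].  It remains to show [prec B C] for every [C] in [Supp(A/AK)].  For
   [K = m K'], an element of [(A/AK)(C)] either survives in [A/AK'] (induction),
   or it lies in [AK'], hence is a sum of products [b p] with [p] in [K']; the
   block decomposition of [b] in [A/Am] then writes it as a sum of parts of
   classes in [Supp(A/Am)], all successors of [B].  Distinct maximal ideals are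
   comaximal, so the sum over classes is direct, and [C] must be one of these
   successors. *)

Lemma big_Forall_ind (T : Type) (M : nmodType) (P : M -> Prop) (Q : T -> Prop)
    (F : T -> M) (s : seq T) :
  P 0 -> (forall x y, P x -> P y -> P (x + y)) -> (forall t, Q t -> P (F t)) ->
  List.Forall Q s -> P (\sum_(t <- s) F t).
Proof.
move=> P0 PD PF; elim: s => [|t s IH]; first by rewrite big_nil.
by case/List.Forall_cons_iff => Qt Qs; rewrite big_cons; apply: PD; [apply: PF | apply: IH].
Qed.

Section SumOfParts.
Variables (k : fieldType) (A : algType k) (G : A -> Prop).
Variables (M : zmodType) (act : A -> M -> M) (N : M -> Prop).
Hypotheses (N0 : N 0) (ND : forall x y, N x -> N y -> N (x + y)).

Lemma null_in_sum_parts P v : N v -> in_sum_parts G act N P v.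
Proof. by move=> Nv; exists [::]; rewrite big_nil subr0. Qed.

Lemma in_sum_partsD P v w : in_sum_parts G act N P v ->
  in_sum_parts G act N P w -> in_sum_parts G act N P (v + w).
Proof.
move=> [s1 [F1 N1]] [s2 [F2 N2]]; exists (s1 ++ s2); split.
  exact/List.Forall_app.
by rewrite big_cat /= opprD addrACA; apply: ND.
Qed.

Lemma part_in_sum_parts (P : cls A -> Prop) C v :
  P C -> part G act N C v -> in_sum_parts G act N P v.
Proof. by move=> PC Cv; exists [:: (C, v)]; rewrite big_seq1 subrr; split=> //; constructor. Qed.

Lemma in_sum_parts_sum (T : Type) P (Q : T -> Prop) (F : T -> M) s :
  (forall t, Q t -> in_sum_parts G act N P (F t)) -> List.Forall Q s ->
  in_sum_parts G act N P (\sum_(t <- s) F t).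
Proof.
by move=> QF; apply: big_Forall_ind => //; [exact: null_in_sum_parts | exact: in_sum_partsD].
Qed.

Lemma in_sum_parts_sub (P Q : cls A -> Prop) v : (forall C, P C -> Q C) ->
  in_sum_parts G act N P v -> in_sum_parts G act N Q v.
Proof.
move=> PQ [s [F Ns]]; exists s; split=> //.
by apply: List.Forall_impl F => p [/PQ].
Qed.

Lemma sub_part_null (N' : M -> Prop) C v : (forall x, N x -> N' x) ->
  part G act N C v -> part G act N' C v.
Proof. by move=> NN' [ms [F H]]; exists ms; split=> // x /H /NN'. Qed.

End SumOfParts.

Arguments null_in_sum_parts {k A G M act N P v}.

Section LeftSpan.
Variables (k : fieldType) (A : algType k).
Implicit Types X Y : A -> Prop.

Lemma left_span0 X : left_span X 0.
Proof. by exists [::]; rewrite big_nil. Qed.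

Lemma left_spanD X x y : left_span X x -> left_span X y -> left_span X (x + y).
Proof.
move=> [s1 [F1 ->]] [s2 [F2 ->]]; exists (s1 ++ s2).
by rewrite big_cat; split=> //; apply/List.Forall_app.
Qed.

Lemma left_spanMl X b x : left_span X x -> left_span X (b * x).
Proof.
move=> [s [F ->]]; exists (map (fun p => (b * p.1, p.2)) s); split.
  exact/List.Forall_map.
by rewrite big_map mulr_sumr; apply: eq_bigr => p _; rewrite mulrA.
Qed.

Lemma mem_left_span X y : X y -> left_span X y.
Proof. by move=> Xy; exists [:: (1, y)]; rewrite big_seq1 mul1r; split=> //; constructor. Qed.

Lemma left_span_sub X Y x : (forall y, X y -> left_span Y y) ->
  left_span X x -> left_span Y x.
Proof.
move=> XY [s [F ->]]; apply: big_Forall_ind F.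
- exact: left_span0.
- exact: left_spanD.
- by move=> p /XY; apply: left_spanMl.
Qed.

End LeftSpan.

Section Subalgebra.
Variables (k : fieldType) (A : algType k) (G : A -> Prop).
Hypothesis hG : subalgebra G.

Lemma subalg1 : G 1. Proof. by case: hG. Qed.
Lemma subalg0 : G 0. Proof. by case: hG. Qed.
Lemma subalgD x y : G x -> G y -> G (x + y). Proof. by case: hG => _ _ + _ _; apply. Qed.
Lemma subalgM x y : G x -> G y -> G (x * y). Proof. by case: hG => _ _ _ + _; apply. Qed.

Lemma idealN m x : ideal_of G m -> m x -> m (- x).
Proof.
case=> _ _ _ mL _ mx; rewrite -mulN1r; apply: mL mx.
by case: hG => G1 _ _ _ GZ; rewrite -scaleN1r; apply: GZ.
Qed.

Lemma ideal_of_self : ideal_of G G.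
Proof.
split=> //; [exact: subalg0 | exact: subalgD | exact: subalgM |].
by move=> g x Gg Gx; apply: subalgM.
Qed.

Lemma ideal_prod_ideal ms : List.Forall (ideal_of G) ms ->
  ideal_of G (ideal_prod G ms).
Proof.
elim: ms => [|m ms IH]; first by move=> _; apply: ideal_of_self.
case/List.Forall_cons_iff => -[mG _ _ mL _] /IH[PG _ _ _ PR].
split=> /=.
- move=> x [s [F ->]]; apply: big_Forall_ind F; [exact: subalg0 | exact: subalgD |].
  by move=> p [/mG ? /PG ?]; apply: subalgM.
- by exists [::]; rewrite big_nil.
- move=> x y [s1 [F1 ->]] [s2 [F2 ->]]; exists (s1 ++ s2).
  by rewrite big_cat; split=> //; apply/List.Forall_app.
- move=> g x Gg [s [F ->]]; exists (map (fun p => (g * p.1, p.2)) s); split.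
    by apply/List.Forall_map; apply: List.Forall_impl F => p [/(mL _ _ Gg)].
  by rewrite big_map mulr_sumr; apply: eq_bigr => p _; rewrite mulrA.
- move=> g x Gg [s [F ->]]; exists (map (fun p => (p.1, p.2 * g)) s); split.
    by apply/List.Forall_map; apply: List.Forall_impl F => p [? /(PR _ _ Gg)].
  by rewrite big_map mulr_suml; apply: eq_bigr => p _; rewrite mulrA.
Qed.

Lemma left_span_prod1 m x : ideal_of G m ->
  left_span (ideal_prod G [:: m]) x -> left_span m x.
Proof.
case=> _ m0 mD _ mR; apply: left_span_sub => y [s [F ->]]; apply: mem_left_span.
by apply: big_Forall_ind F => // p [mp Gp]; apply: mR.
Qed.

Lemma left_span_prod_cons m ms x :
  left_span (ideal_prod G (m :: ms)) x -> left_span (ideal_prod G ms) x.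
Proof.
apply: left_span_sub => y [s [F ->]]; exists s; split=> //.
by apply: List.Forall_impl F => p [].
Qed.

Lemma left_span_mul_prod m ms r p : left_span m r -> ideal_prod G ms p ->
  left_span (ideal_prod G (m :: ms)) (r * p).
Proof.
move=> [s [F ->]] Pp; rewrite mulr_suml; apply: big_Forall_ind F.
- exact: left_span0.
- exact: left_spanD.
move=> q mq; rewrite -mulrA; apply/left_spanMl/mem_left_span.
by exists [:: (q.2, p)]; rewrite big_seq1; split=> //; constructor.
Qed.

Definition comaximal (I J : A -> Prop) := exists i j, [/\ I i, J j & 1 = i + j].

Lemma comaximal_sym I J : comaximal I J -> comaximal J I.
Proof. by move=> [i [j [Ii Jj E]]]; exists j, i; rewrite addrC. Qed.

Lemma cfs_ideal m : cfs G m -> ideal_of G m.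
Proof. by case=> [[]]. Qed.

Lemma cfs_comaximal m n : cfs G m -> cfs G n -> ~ (forall x, m x <-> n x) ->
  comaximal m n.
Proof.
move=> [[im [g [Gg nmg]] maxm] _] [[iN _ maxn] _] mn.
have [mG m0 mD mL mR] := im; have [nG n0 nD nL nR] := iN.
pose J x := exists e h, [/\ m e, n h & x = e + h].
have iJ : ideal_of G J.
  split.
  - by move=> _ [e [h [me nh ->]]]; apply: subalgD; [apply: mG | apply: nG].
  - by exists 0, 0; rewrite addr0.
  - move=> _ _ [e [h [me nh ->]]] [e' [h' [me' nh' ->]]].
    by exists (e + e'), (h + h'); rewrite addrACA; split; [apply: mD | apply: nD |].
  - move=> g' _ Gg' [e [h [me nh ->]]]; exists (g' * e), (g' * h).
    by rewrite mulrDr; split; [apply: mL | apply: nL |].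
  - move=> g' _ Gg' [e [h [me nh ->]]]; exists (e * g'), (h * g').
    by rewrite mulrDl; split; [apply: mR | apply: nR |].
have mJ x : m x -> J x by move=> mx; exists x, 0; rewrite addr0.
case: (maxm J iJ mJ) => [JE | /(_ 1)[_ /(_ subalg1)[e [h [me nh E]]]]]; last first.
  by exists e, h.
have nm x : n x -> m x by move=> nx; apply/JE; exists 0, x; rewrite add0r.
case: (maxn m im nm) => [mE | mE]; first by case: mn => x; rewrite mE.
by case: nmg; apply/mE.
Qed.

Lemma comaximal_prod I ms : ideal_of G I -> List.Forall (ideal_of G) ms ->
  List.Forall (comaximal I) ms -> comaximal I (ideal_prod G ms).
Proof.
move=> iI; have [IG _ ID _ IR] := iI.
elim: ms => [|m ms IH].
  by exists 0, 1; rewrite add0r; split=> //; [case: iI | apply: subalg1].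
case/List.Forall_cons_iff => _ /IH {}IH /List.Forall_cons_iff[[i1 [y [Ii1 my E1]]]].
move=> /IH[i2 [p [Ii2 Pp E2]]].
exists (i1 + i2 - i1 * i2), (y * p); split.
- exact: ID (ID _ _ Ii1 Ii2) (idealN iI (IR _ _ (IG _ Ii2) Ii1)).
- by exists [:: (y, p)]; rewrite big_seq1; split=> //; constructor.
have -> : y = 1 - i1 by rewrite E1 addrC addKr.
have -> : p = 1 - i2 by rewrite E2 addrC addKr.
have -> : (1 - i1) * (1 - i2) = 1 - (i1 + i2 - i1 * i2).
  rewrite mulrBl !mulrBr !mul1r mulr1 !opprB opprD -addrA.
  by congr (_ + _); rewrite addrCA [- i2 + _]addrC.
by rewrite addrC subrK.
Qed.

End Subalgebra.

Section Classes.
Variables (k : fieldType) (A : algType k) (G : A -> Prop)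
  (sim : (A -> Prop) -> (A -> Prop) -> Prop).
Hypotheses (hG : subalgebra G) (hsim : equiv_on (cfs G) sim).

Lemma class_cfs C n : is_class G sim C -> C n -> cfs G n.
Proof. by move=> [m [_ CE]] /CE[]. Qed.

Lemma class_ideals C ms : is_class G sim C -> List.Forall C ms ->
  List.Forall (ideal_of G) ms.
Proof. by move=> hC; apply: List.Forall_impl => n /(class_cfs hC)/cfs_ideal. Qed.

Lemma is_class_eq C D : is_class G sim C -> is_class G sim D ->
  (exists n, C n /\ D n) -> C = D.
Proof.
move=> [m1 [c1 CE]] [m2 [c2 DE]] [n [/CE[cn s1n] /DE[_ s2n]]].
case: hsim => _ sym trans.
have s12 : sim m1 m2 := trans _ _ _ c1 cn c2 s1n (sym _ _ c2 cn s2n).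
have s21 : sim m2 m1 := trans _ _ _ c2 cn c1 s2n (sym _ _ c1 cn s1n).
apply: functional_extensionality => x; apply: propositional_extensionality.
rewrite CE DE; split=> -[cx sx]; split=> //.
  exact: trans c2 c1 cx s21 sx.
exact: trans c1 c2 cx s12 sx.
Qed.

Lemma disjoint_classes_comaximal C D ms ns : is_class G sim C -> is_class G sim D ->
  ~ (exists n, C n /\ D n) -> List.Forall C ms -> List.Forall D ns ->
  comaximal (ideal_prod G ms) (ideal_prod G ns).
Proof.
move=> hC hD CD Cms Dns.
have Ins := class_ideals hD Dns.
have comax_ns m : C m -> comaximal m (ideal_prod G ns).
  move=> Cm; apply: (comaximal_prod hG) => //; first exact: cfs_ideal (class_cfs hC Cm).
  apply: List.Forall_impl Dns => n Dn.
  apply: (cfs_comaximal hG) (class_cfs hC Cm) (class_cfs hD Dn) _ => mn.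
  apply: CD; exists m; split=> //.
  suff -> : m = n by [].
  by apply: functional_extensionality => x; apply: propositional_extensionality.
apply/comaximal_sym/(comaximal_prod hG); first exact: ideal_prod_ideal.
  exact: class_ideals hC Cms.
by apply: List.Forall_impl Cms => m /comax_ns/comaximal_sym.
Qed.

Local Notation amul := (fun x (a : A) => x * a).

(* [1 = e + h] with [e] killing [a] and [h] killing the first summand [c]:
   the left factor [g] of the induction becomes [h g] once [c] is peeled off. *)
Lemma left_span_part_disjoint K C a s : is_class G sim C ->
  part G amul (left_span K) C a ->
  List.Forall (fun p => [/\ is_class G sim p.1, ~ (exists n, C n /\ p.1 n)
                          & part G amul (left_span K) p.1 p.2]) s ->
  left_span K (a - \sum_(p <- s) p.2) -> left_span K a.
Proof.
move=> hC [ms [Cms anna]].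
have [IG _ _ _ IR] := ideal_prod_ideal hG (class_ideals hC Cms).
rewrite -[a]mul1r -[\sum_(p <- s) p.2]mul1r; move: 1 (subalg1 hG).
elim: s => [|[D c] s IH] g Gg; first by rewrite big_nil mulr0 subr0.
case/List.Forall_cons_iff => -[/= hD CD [ns [Dns annc]]] Fs.
have [IG' _ _ _ IR'] := ideal_prod_ideal hG (class_ideals hD Dns).
have [e [h [Ie Ih E]]] := disjoint_classes_comaximal hC hD CD Cms Dns.
rewrite big_cons /= => Kgcs; rewrite -[g * a]mul1r E mulrDl; apply: left_spanD.
  by rewrite mulrA; apply: anna (IR _ _ Gg Ie).
rewrite mulrA; apply: (IH _ (subalgM hG (IG' _ Ih) Gg) Fs).
have -> : h * g * a - h * g * (\sum_(p <- s) p.2) =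
          h * (g * a - g * (c + \sum_(p <- s) p.2)) + h * g * c.
  by rewrite mulrBr [g * (c + _)]mulrDr mulrDr !mulrA opprD addrA addrAC subrK.
by apply: left_spanD; [apply: left_spanMl | apply: annc (IR' _ _ Gg Ih)].
Qed.

End Classes.

Section AModule.
Variables (k : fieldType) (A : algType k) (V : lmodType k) (act : A -> V -> V).
Hypothesis hV : is_Amodule act.

Lemma actr0 a : act a 0 = 0.
Proof. by case: hV => -[addv _ _ _] _; apply: (addrI (act a 0)); rewrite -addv !addr0. Qed.

Lemma actl0 v : act 0 v = 0.
Proof. by case: hV => -[_ _ adda _] _; apply: (addrI (act 0 v)); rewrite -adda !addr0. Qed.

Lemma actr_sum (T : Type) a (F : T -> V) s :
  act a (\sum_(t <- s) F t) = \sum_(t <- s) act a (F t).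
Proof. by case: hV => -[addv _ _ _] _; exact: (big_morph (act a) (addv a) (actr0 a)). Qed.

Lemma actl_sum (T : Type) (F : T -> A) s v :
  act (\sum_(t <- s) F t) v = \sum_(t <- s) act (F t) v.
Proof.
by case: hV => -[_ _ adda _] _; exact: (big_morph (act^~ v) (fun x y => adda x y v) (actl0 v)).
Qed.

Lemma actlB x y v : act (x - y) v = act x v - act y v.
Proof. by case: hV => -[_ _ adda scalea] _; rewrite adda -[- y]scaleN1r scalea scaleN1r. Qed.

Lemma act_left_span (K : A -> Prop) r w : (forall x, K x -> act x w = 0) ->
  left_span K r -> act r w = 0.
Proof.
case: hV => _ [_ actM] Kw [s [F ->]]; rewrite actl_sum.
apply: (big_Forall_ind (P := fun u => u = 0)) F => [//|x y -> ->|p Kp]; first exact: addr0.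
by rewrite actM Kw // actr0.
Qed.

Lemma act_part (G K : A -> Prop) C c w : (forall x, K x -> act x w = 0) ->
  part G (fun x (a : A) => x * a) (left_span K) C c ->
  part G act (fun u => u = 0) C (act c w).
Proof.
case: hV => _ [_ actM] Kw [ns [Cns annc]]; exists ns; split=> // x Px.
by rewrite -actM; apply: act_left_span Kw (annc x Px).
Qed.

End AModule.

Lemma prec_is_class (k : fieldType) (A : algType k) (G : A -> Prop) sim B C :
  prec G sim B C -> is_class G sim B -> is_class G sim C.
Proof.
elim=> [_ _ [_ [_ [_ [hC _]]]] | // | B1 B2 B3 _ IH12 _ IH23] // hB1.
exact/IH23/IH12.
Qed.

Section HarishChandraBlock.
Variables (k : fieldType) (A : algType k) (G : A -> Prop)
  (sim : (A -> Prop) -> (A -> Prop) -> Prop).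
Hypotheses (hG : subalgebra G) (hsim : equiv_on (cfs G) sim)
  (hHC : HC_block_subalgebra G sim).

Local Notation amul := (fun x (a : A) => x * a).

Lemma mul_prod_in_sum_parts_prec B m ms b p : is_class G sim B -> B m ->
  ideal_prod G ms p ->
  in_sum_parts G amul (left_span (ideal_prod G (m :: ms))) (prec G sim B) (b * p).
Proof.
move=> hB Bm Pp.
have im : ideal_of G m := cfs_ideal (class_cfs hB Bm).
have [s [Fs bs]] := hHC hB (List.Forall_cons _ Bm (List.Forall_nil _)) b.
have -> : b * p = (b - \sum_(q <- s) q.2) * p + \sum_(q <- s) q.2 * p.
  by rewrite mulrBl -mulr_suml subrK.
apply: in_sum_partsD; first exact: left_spanD.
  exact/null_in_sum_parts/(left_span_mul_prod (left_span_prod1 im bs) Pp).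
apply: in_sum_parts_sum Fs => [||[C c] [hC pc] /=]; [exact: left_span0 | exact: left_spanD |].
have [mc | nmc] := classic (left_span m c).
  exact/null_in_sum_parts/left_span_mul_prod.
have pc1 := sub_part_null (fun x => left_span_prod1 (x := x) im) pc.
have pcp : part G amul (left_span (ideal_prod G (m :: ms))) C (c * p).
  case: pc1 => ns [Cns annc]; exists ns; split=> // x Px.
  by rewrite mulrA; apply: left_span_mul_prod (annc x Px) Pp.
apply: (part_in_sum_parts (left_span0 _) _ pcp).
by apply: Relation_Operators.rt_step; split=> //; exists m; split=> //; split=> //; exists c.
Qed.

Lemma supp_prod_prec B ms C : is_class G sim B -> List.Forall B ms ->
  supp G sim amul (left_span (ideal_prod G ms)) C -> prec G sim B C.
Proof.
move=> hB; elim: ms => [|m ms IH] Bms [hC [a [Ka nKa]]].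
  by case: nKa; rewrite -[a]mulr1; apply/left_spanMl/mem_left_span/(subalg1 hG).
case/List.Forall_cons_iff: Bms => Bm Bms.
have [Pa | nPa] := classic (left_span (ideal_prod G ms) a); last first.
  apply: IH => //; split=> //; exists a; split=> //.
  by apply: sub_part_null Ka => x; apply: left_span_prod_cons.
have [s [Fs Ksa]] : in_sum_parts G amul (left_span (ideal_prod G (m :: ms)))
    (prec G sim B) a.
  case: Pa => s [Ps ->]; apply: in_sum_parts_sum Ps; [exact: left_span0 | exact: left_spanD |].
  by move=> q Pq; apply: mul_prod_in_sum_parts_prec.
have [[q [sq meet]] | nomeet] := classic (exists q, List.In q s /\ exists n, C n /\ q.1 n).
  have [Bq _] := proj1 (List.Forall_forall _ _) Fs q sq.
  by rewrite (is_class_eq hsim hC (prec_is_class Bq hB) meet).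
case: nKa; apply: (left_span_part_disjoint hG hC Ka) Ksa.
apply/List.Forall_forall => q sq.
have [Bq pq] := proj1 (List.Forall_forall _ _) Fs q sq.
by split=> // [|meet]; [exact: prec_is_class Bq hB | apply: nomeet; exists q].
Qed.

Variables (V : lmodType k) (act : A -> V -> V).
Hypothesis hV : is_Amodule act.

Lemma act_part_in_sum_parts B w a : is_class G sim B ->
  part G act (fun u => u = 0) B w ->
  in_sum_parts G act (fun u => u = 0) (prec G sim B) (act a w).
Proof.
move=> hB [ms [Bms annw]].
have Kw x : left_span (ideal_prod G ms) x -> act x w = 0 := act_left_span hV annw.
have [s [Fs Ka]] := hHC hB Bms a.
have -> : act a w = act (a - \sum_(q <- s) q.2) w + \sum_(q <- s) act q.2 w.
  by rewrite (actlB hV) (actl_sum hV) subrK.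
have null_add (u v : V) : u = 0 -> v = 0 -> u + v = 0 by move=> -> ->; rewrite addr0.
apply: in_sum_partsD => //; first exact/null_in_sum_parts/Kw.
apply: in_sum_parts_sum Fs => // -[C c] [hC pc] /=.
have [Kc | nKc] := classic (left_span (ideal_prod G ms) c).
  exact/null_in_sum_parts/Kw.
have pcw := act_part hV annw pc.
apply: (part_in_sum_parts _ _ pcw) => //.
by apply: supp_prod_prec hB Bms _; split=> //; exists c.
Qed.

End HarishChandraBlock.

Theorem mainTheorem4 (k : fieldType) (A : algType k) (G : A -> Prop)
  (sim : (A -> Prop) -> (A -> Prop) -> Prop)
  (hG : subalgebra G) (hsim : equiv_on (cfs G) sim)
  (hHC : HC_block_subalgebra G sim)
  (V : lmodType k) (act : A -> V -> V) (hV : is_Amodule act)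
  (D : cls A -> Prop) (hD : forall B, D B -> is_class G sim B) :
  forall (a : A) (v : V),
    in_sum_parts G act (fun w => w = 0) D v ->
    in_sum_parts G act (fun w => w = 0)
      (fun C => exists B, D B /\ prec G sim B C) (act a v).
Proof.
move=> a v [s [Fs /eqP]]; rewrite subr_eq0 => /eqP ->.
rewrite (actr_sum hV).
apply: in_sum_parts_sum Fs => [//|x y -> ->|[B w] [DB Bw]]; first exact: addr0.
apply: in_sum_parts_sub (act_part_in_sum_parts hG hsim hHC hV a (hD B DB) Bw).
by move=> C BC; exists B.
Qed.
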